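(* Let $G$ be any GP 2 host graph in which every node is marked grey and is not a root, and every edge is unmarked (labels arbitrary; parallel edges and loops allowed). Then the execution of the GP 2 program is-dag on $G$ terminates, and: if $G$ is acyclic, it does not fail and returns a host graph isomorphic to $G$ up to marks; if $G$ contains a directed cycle, it fails. (That is, is-dag is totally correct with respect to this specification.)
   Context: A graph is acyclic if it contains no directed cycle; a loop (edge from a node to itself) counts as a directed cycle. ''Isomorphic up to marks'' means isomorphic when marks and root status are ignored. GP 2 semantics. Host graphs are finite directed graphs whose nodes and edges carry labels (lists of integers and strings) and marks (nodes: unmarked, red, green, blue, grey; edges: unmarked, red, green, blue, dashed); some nodes are roots. A rule is applied by finding an injective match of its left-hand side compatible with labels and marks (mark ''any'' matches every mark; roots match roots), satisfying the dangling condition, then changing matched items as prescribed by the right-hand side. Commands: a rule set call $\{r_1,\dots,r_k\}$ applies one applicable rule, failing if none applies; $P;Q$ sequencing; $P!$ iterates $P$ until it fails, returning the graph on which $P$ was last entered (a break inside the body terminates the innermost loop with the current graph); ''try $C$ then $P$ else $Q$'' runs $C$ and continues with $P$ on its result if it succeeded, else runs $Q$ on the original graph (missing branches do nothing); ''if $C$ then $P$ else $Q$'' runs $C$ on a copy then $P$ or $Q$ on the original; fail causes failure. The program is-dag (variables of type list; all rules keep labels; rule edges are directed from node 1 to node 2): Main = (init; DFS!; try unroot else break)!; Check DFS = try next_edge then (try {move, ignore} else (set_flag; break)) else (try loop; try back else break) Check = if flag then fail - init: a grey non-root node becomes a red root. - unroot: a red root becomes a blue non-root node. - set_flag: a red root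 becomes a green root. - flag: a green root; no change (test). - next_edge: a red root 1, a node 2 of any mark, an unmarked edge from 1 to 2; the edge becomes red. - ignore: red root 1, blue node 2, red edge from 1 to 2; the edge becomes blue. - move: red root 1, grey node 2, red edge from 1 to 2; node 1 becomes a red non-root, node 2 becomes a red root, the edge becomes dashed. - back: red non-root 1, red root 2, dashed edge from 1 to 2; node 1 becomes a red root, node 2 becomes a blue non-root, the edge becomes blue. - loop: a red root with an unmarked loop; the node becomes a green root, the loop is unchanged. *)

From mathcomp Require Import all_boot ssrint.
From Stdlib Require String.
Set Implicit Arguments.
Unset Strict Implicit.
Unset Printing Implicit Defensive.

Inductive atom := AInt of int | AStr of String.string.
Definition label := seq atom.

Inductive nmark := NUnmarked | NRed | NGreen | NBlue | NGrey.
Inductive emark := EUnmarked | ERed | EGreen | EBlue | EDashed.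

Record hgraph := HGraph {
  hV : finType;
  hE : finType;
  hsrc : hE -> hV;
  htgt : hE -> hV;
  hlabV : hV -> label;
  hlabE : hE -> label;
  hmarkV : hV -> nmark;
  hmarkE : hE -> emark;
  hroot : hV -> bool }.

Definition remark (G : hgraph) (mv : hV G -> nmark) (me : hE G -> emark)
  (rt : hV G -> bool) : hgraph :=
  @HGraph (hV G) (hE G) (@hsrc G) (@htgt G) (@hlabV G) (@hlabE G) mv me rt.

Definition upd (T : eqType) (U : Type) (f : T -> U) (x : T) (y : U) : T -> U :=
  fun z => if z == x then y else f z.

(* Matching conventions (GP 2): matches are injective (so distinct rule nodes
   go to distinct host nodes); a root rule node only matches a root host node,
   while a non-root rule node matches root and non-root host nodes alike; a
   rule node that is root on the left and non-root on the right loses its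
   root status, one that is non-root on the left and root on the right gains
   it, otherwise root status is unchanged.  Rule edges are directed from node
   1 to node 2.  No rule deletes anything, so the dangling condition is
   vacuous. *)

Inductive rule := r_init | r_unroot | r_set_flag | r_flag | r_next_edge
                | r_ignore | r_move | r_back | r_loop.

Definition rule_app (r : rule) (G H : hgraph) : Prop :=
  let mV := @hmarkV G in let mE := @hmarkE G in let rt := @hroot G in
  match r with
  | r_init => exists v : hV G, mV v = NGrey /\
      H = remark (upd mV v NRed) mE (upd rt v true)
  | r_unroot => exists v : hV G, rt v /\ mV v = NRed /\
      H = remark (upd mV v NBlue) mE (upd rt v false)
  | r_set_flag => exists v : hV G, rt v /\ mV v = NRed /\
      H = remark (upd mV v NGreen) mE rt
  | r_flag => exists v : hV G, rt v /\ mV v = NGreen /\ H = G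
  | r_next_edge => exists (v1 v2 : hV G) (e : hE G),
      v1 != v2 /\ rt v1 /\ mV v1 = NRed /\
      hsrc e = v1 /\ htgt e = v2 /\ mE e = EUnmarked /\
      H = remark mV (upd mE e ERed) rt
  | r_ignore => exists (v1 v2 : hV G) (e : hE G),
      v1 != v2 /\ rt v1 /\ mV v1 = NRed /\ mV v2 = NBlue /\
      hsrc e = v1 /\ htgt e = v2 /\ mE e = ERed /\
      H = remark mV (upd mE e EBlue) rt
  | r_move => exists (v1 v2 : hV G) (e : hE G),
      v1 != v2 /\ rt v1 /\ mV v1 = NRed /\ mV v2 = NGrey /\
      hsrc e = v1 /\ htgt e = v2 /\ mE e = ERed /\
      H = remark (upd (upd mV v1 NRed) v2 NRed) (upd mE e EDashed)
                 (upd (upd rt v1 false) v2 true)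
  | r_back => exists (v1 v2 : hV G) (e : hE G),
      v1 != v2 /\ mV v1 = NRed /\ rt v2 /\ mV v2 = NRed /\
      hsrc e = v1 /\ htgt e = v2 /\ mE e = EDashed /\
      H = remark (upd mV v2 NBlue) (upd mE e EBlue)
                 (upd (upd rt v1 true) v2 false)
  | r_loop => exists (v : hV G) (e : hE G),
      rt v /\ mV v = NRed /\ hsrc e = v /\ htgt e = v /\ mE e = EUnmarked /\
      H = remark (upd mV v NGreen) mE rt
  end.

Inductive cmd :=
  | RuleSet of seq rule          (* {r1,...,rk}; a single rule call is {r} *)
  | CSeq of cmd & cmd
  | CLoop of cmd
  | CTry of cmd & cmd & cmd
  | CIf of cmd & cmd & cmd
  | Skip
  | Break
  | CFail.

Inductive outcome := Res of hgraph | Failed | Brk of hgraph.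

(* Terminating executions: exec P G o means that some run of P on G
   terminates with outcome o (a result graph, failure, or a pending break). *)
Inductive exec : cmd -> hgraph -> outcome -> Prop :=
  | ex_rule rs r G H : List.In r rs -> rule_app r G H -> exec (RuleSet rs) G (Res H)
  | ex_rule_fail rs G : (forall r, List.In r rs -> forall H, ~ rule_app r G H) ->
      exec (RuleSet rs) G Failed
  | ex_seq P Q G H o : exec P G (Res H) -> exec Q H o -> exec (CSeq P Q) G o
  | ex_seq_fail P Q G : exec P G Failed -> exec (CSeq P Q) G Failed
  | ex_seq_brk P Q G H : exec P G (Brk H) -> exec (CSeq P Q) G (Brk H)
  | ex_loop P G H o : exec P G (Res H) -> exec (CLoop P) H o -> exec (CLoop P) G o
  | ex_loop_fail P G : exec P G Failed -> exec (CLoop P) G (Res G)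
  | ex_loop_brk P G H : exec P G (Brk H) -> exec (CLoop P) G (Res H)
  | ex_try_ok C P Q G H o : exec C G (Res H) -> exec P H o -> exec (CTry C P Q) G o
  | ex_try_fail C P Q G o : exec C G Failed -> exec Q G o -> exec (CTry C P Q) G o
  | ex_try_brk C P Q G H : exec C G (Brk H) -> exec (CTry C P Q) G (Brk H)
  | ex_if_ok C P Q G H o : exec C G (Res H) -> exec P G o -> exec (CIf C P Q) G o
  | ex_if_fail C P Q G o : exec C G Failed -> exec Q G o -> exec (CIf C P Q) G o
  | ex_if_brk C P Q G H : exec C G (Brk H) -> exec (CIf C P Q) G (Brk H)
  | ex_skip G : exec Skip G (Res G)
  | ex_break G : exec Break G (Brk G)
  | ex_fail G : exec CFail G Failed.

CoInductive diverges : cmd -> hgraph -> Prop :=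
  | dv_seq1 P Q G : diverges P G -> diverges (CSeq P Q) G
  | dv_seq2 P Q G H : exec P G (Res H) -> diverges Q H -> diverges (CSeq P Q) G
  | dv_loop1 P G : diverges P G -> diverges (CLoop P) G
  | dv_loop2 P G H : exec P G (Res H) -> diverges (CLoop P) H -> diverges (CLoop P) G
  | dv_try1 C P Q G : diverges C G -> diverges (CTry C P Q) G
  | dv_try2 C P Q G H : exec C G (Res H) -> diverges P H -> diverges (CTry C P Q) G
  | dv_try3 C P Q G : exec C G Failed -> diverges Q G -> diverges (CTry C P Q) G
  | dv_if1 C P Q G : diverges C G -> diverges (CIf C P Q) G
  | dv_if2 C P Q G H : exec C G (Res H) -> diverges P G -> diverges (CIf C P Q) G
  | dv_if3 C P Q G : exec C G Failed -> diverges Q G -> diverges (CIf C P Q) G.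

Definition R1 (r : rule) : cmd := RuleSet [:: r].

Definition DFS : cmd :=
  CTry (R1 r_next_edge)
       (CTry (RuleSet [:: r_move; r_ignore]) Skip (CSeq (R1 r_set_flag) Break))
       (CSeq (CTry (R1 r_loop) Skip Skip) (CTry (R1 r_back) Skip Break)).

Definition Check : cmd := CIf (R1 r_flag) CFail Skip.

Definition is_dag : cmd :=
  CSeq (CLoop (CSeq (R1 r_init) (CSeq (CLoop DFS) (CTry (R1 r_unroot) Skip Break))))
       Check.

(* G contains a directed cycle: a nonempty closed directed walk
   e0, e1, ..., ek (a loop is a cycle of length 1). *)
Definition has_dir_cycle (G : hgraph) : Prop :=
  exists (e0 : hE G) (es : seq (hE G)),
    path (fun e f => htgt e == hsrc f) e0 es && (htgt (last e0 es) == hsrc e0).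

Definition acyclic (G : hgraph) : Prop := ~ has_dir_cycle G.

Definition iso_upto_marks (G H : hgraph) : Prop :=
  exists (fV : hV G -> hV H) (fE : hE G -> hE H),
    bijective fV /\ bijective fE /\
    (forall e, hsrc (fE e) = fV (hsrc e)) /\
    (forall e, htgt (fE e) = fV (htgt e)) /\
    (forall v, hlabV (fV v) = hlabV v) /\
    (forall e, hlabE (fE e) = hlabE e).

Definition initial_graph (G : hgraph) : Prop :=
  (forall v : hV G, hmarkV v = NGrey /\ hroot v = false) /\
  (forall e : hE G, hmarkE e = EUnmarked).

(* Termination: every rule except the test [flag] lowers a weight counting grey
   and red nodes and unmarked, red and dashed edges, and every normally returning
   run of a loop body applies such a rule.

   Correctness: rules only change marks and roots.  While a search runs, the
   red nodes are the root [r] and the sources of a stack of dashed edges forming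
   a walk to [r]; blue nodes are finished, and a rank strictly decreases along
   their out-edges.  An edge from [r] to a red node closes a cycle with the
   stack, a loop is a cycle, and in both cases a green root appears, which no
   rule removes, so [Check] fails.  Otherwise every node ends blue, the rank
   shows that [G] is acyclic, and [Check] returns [G] with new marks. *)

From mathcomp Require Import all_boot zify.
From Stdlib Require Import Classical.
Set Implicit Arguments.
Unset Strict Implicit.
Unset Printing Implicit Defensive.

(** * Executions of commands *)

Lemma loop_diverges P X :
  (forall X, (exists o, exec P X o) \/ diverges P X) ->
  ~ (exists o, exec (CLoop P) X o) -> diverges (CLoop P) X.
Proof.
move=> total; move: X; cofix CIH => X stuck.
destruct (total X) as [[[Y| |Y] eP]|dP].
- apply: (dv_loop2 eP); apply: CIH => -[o eL].
  by apply: stuck; exists o; apply: ex_loop eP eL.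
- by case: stuck; exists (Res X); apply: ex_loop_fail.
- by case: stuck; exists (Res Y); apply: ex_loop_brk.
- exact: dv_loop1.
Qed.

Lemma exec_or_diverges P X : (exists o, exec P X o) \/ diverges P X.
Proof.
elim: P X => [rs|P IHP Q IHQ|P IHP|C IHC P IHP Q IHQ|C IHC P IHP Q IHQ| | |] X.
- have [[r [Y [in_r rY]]]|stuck] := classic (exists r Y, List.In r rs /\ rule_app r X Y).
    by left; exists (Res Y); apply: ex_rule rY.
  left; exists Failed; apply: ex_rule_fail => r in_r Y rY.
  by apply: stuck; exists r, Y.
- have [[[Y| |Y] eP]|dP] := IHP X; last by right; apply: dv_seq1.
  + have [[o eQ]|dQ] := IHQ Y; first by left; exists o; apply: ex_seq eP eQ.
    by right; apply: dv_seq2 eP dQ.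
  + by left; exists Failed; apply: ex_seq_fail.
  + by left; exists (Brk Y); apply: ex_seq_brk.
- have [|stuck] := classic (exists o, exec (CLoop P) X o); [by left | right].
  exact: loop_diverges.
- have [[[Y| |Y] eC]|dC] := IHC X; last by right; apply: dv_try1.
  + have [[o eP]|dP] := IHP Y; first by left; exists o; apply: ex_try_ok eC eP.
    by right; apply: dv_try2 eC dP.
  + have [[o eQ]|dQ] := IHQ X; first by left; exists o; apply: ex_try_fail eC eQ.
    by right; apply: dv_try3 eC dQ.
  + by left; exists (Brk Y); apply: ex_try_brk.
- have [[[Y| |Y] eC]|dC] := IHC X; last by right; apply: dv_if1.
  + have [[o eP]|dP] := IHP X; first by left; exists o; apply: ex_if_ok eC eP.
    by right; apply: dv_if2 eC dP.
  + have [[o eQ]|dQ] := IHQ X; first by left; exists o; apply: ex_if_fail eC eQ.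
    by right; apply: dv_if3 eC dQ.
  + by left; exists (Brk Y); apply: ex_if_brk.
- by left; exists (Res X); apply: ex_skip.
- by left; exists (Brk X); apply: ex_break.
- by left; exists Failed; apply: ex_fail.
Qed.

Lemma exec_rules_res rs X Y :
  exec (RuleSet rs) X (Res Y) -> exists2 r, List.In r rs & rule_app r X Y.
Proof. by move=> h; inversion h; exists r. Qed.

Lemma exec_rules_failed rs X :
  exec (RuleSet rs) X Failed -> forall r, List.In r rs -> forall Y, ~ rule_app r X Y.
Proof. by move=> h; inversion h. Qed.

Lemma exec_rules_no_brk rs X Y : ~ exec (RuleSet rs) X (Brk Y).
Proof. by move=> h; inversion h. Qed.

Lemma exec_rule_res r X Y : exec (R1 r) X (Res Y) -> rule_app r X Y.
Proof. by case/exec_rules_res => r' [<-|[]]. Qed.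

Lemma exec_rule_failed r X : exec (R1 r) X Failed -> forall Y, ~ rule_app r X Y.
Proof. by move/exec_rules_failed; apply; left. Qed.

Lemma exec_skip X o : exec Skip X o -> o = Res X.
Proof. by move=> h; inversion h. Qed.

Lemma exec_break X o : exec Break X o -> o = Brk X.
Proof. by move=> h; inversion h. Qed.

Lemma exec_fail X o : exec CFail X o -> o = Failed.
Proof. by move=> h; inversion h. Qed.

Variant exec_seq_spec P Q X : outcome -> Prop :=
  | SeqRes Y o of exec P X (Res Y) & exec Q Y o : exec_seq_spec P Q X o
  | SeqFailed of exec P X Failed : exec_seq_spec P Q X Failed
  | SeqBrk Y of exec P X (Brk Y) : exec_seq_spec P Q X (Brk Y).

Lemma exec_seqP P Q X o : exec (CSeq P Q) X o -> exec_seq_spec P Q X o.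
Proof. by move=> h; inversion h; econstructor; eauto. Qed.

Lemma exec_seq_res P Q X Y :
  exec (CSeq P Q) X (Res Y) -> exists2 Z, exec P X (Res Z) & exec Q Z (Res Y).
Proof. by move=> h; inversion h; exists H. Qed.

Variant exec_try_spec C P Q X : outcome -> Prop :=
  | TryRes Y o of exec C X (Res Y) & exec P Y o : exec_try_spec C P Q X o
  | TryFailed o of exec C X Failed & exec Q X o : exec_try_spec C P Q X o
  | TryBrk Y of exec C X (Brk Y) : exec_try_spec C P Q X (Brk Y).

Lemma exec_tryP C P Q X o : exec (CTry C P Q) X o -> exec_try_spec C P Q X o.
Proof. by move=> h; inversion h; econstructor; eauto. Qed.

Variant exec_if_spec C P Q X : outcome -> Prop :=
  | IfRes Y o of exec C X (Res Y) & exec P X o : exec_if_spec C P Q X o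
  | IfFailed o of exec C X Failed & exec Q X o : exec_if_spec C P Q X o
  | IfBrk Y of exec C X (Brk Y) : exec_if_spec C P Q X (Brk Y).

Lemma exec_ifP C P Q X o : exec (CIf C P Q) X o -> exec_if_spec C P Q X o.
Proof. by move=> h; inversion h; econstructor; eauto. Qed.

Variant try_rule_else_break_spec r X : outcome -> Prop :=
  | RuleElseBreakApplied Y of rule_app r X Y : try_rule_else_break_spec r X (Res Y)
  | RuleElseBreakStuck of (forall Y, ~ rule_app r X Y) : try_rule_else_break_spec r X (Brk X).

Lemma exec_try_rule_else_breakP r X o :
  exec (CTry (R1 r) Skip Break) X o -> try_rule_else_break_spec r X o.
Proof.
case/exec_tryP => [Y {}o /exec_rule_res rY /exec_skip -> |
                   {}o /exec_rule_failed stuck /exec_break -> |].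
- exact: RuleElseBreakApplied.
- exact: RuleElseBreakStuck.
- by move=> Y /exec_rules_no_brk.
Qed.

Lemma exec_try_rule_res r X o : exec (CTry (R1 r) Skip Skip) X o -> exists Y, o = Res Y.
Proof.
case/exec_tryP => [Y {}o _ /exec_skip -> | {}o _ /exec_skip -> | Y /exec_rules_no_brk //];
  by eexists.
Qed.

Variant try_rule_spec r X : hgraph -> Prop :=
  | TryRuleApplied Y of rule_app r X Y : try_rule_spec r X Y
  | TryRuleStuck of (forall Y, ~ rule_app r X Y) : try_rule_spec r X X.

Lemma exec_try_ruleP r X Y : exec (CTry (R1 r) Skip Skip) X (Res Y) -> try_rule_spec r X Y.
Proof.
move E: (Res Y) => o h; case/exec_tryP: h E => [Z {}o /exec_rule_res app /exec_skip -> [->] |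
                                          {}o /exec_rule_failed stuck /exec_skip -> [->] | //].
- exact: TryRuleApplied.
- exact: TryRuleStuck.
Qed.

Definition never_fails c := forall X, ~ exec c X Failed.

Lemma never_fails_skip : never_fails Skip.
Proof. by move=> X /exec_skip. Qed.

Lemma never_fails_break : never_fails Break.
Proof. by move=> X /exec_break. Qed.

Lemma never_fails_try C P Q : never_fails P -> never_fails Q -> never_fails (CTry C P Q).
Proof. by move=> nP nQ X h; inversion h; [apply: nP | apply: nQ]; eauto. Qed.

(** * Termination *)

Definition terminates c := forall X, ~ diverges c X.

Fixpoint loop_free c :=
  match c with
  | CSeq P Q => loop_free P && loop_free Q
  | CLoop _ => false
  | CTry C P Q | CIf C P Q => [&& loop_free C, loop_free P & loop_free Q]
  | _ => true
  end.

Lemma terminates_seq P Q : terminates P -> terminates Q -> terminates (CSeq P Q).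
Proof. by move=> tP tQ X h; inversion h; [apply: tP | apply: tQ]; eauto. Qed.

Lemma loop_free_terminates c : loop_free c -> terminates c.
Proof.
elim: c => [rs|P IHP Q IHQ|//|C IHC P IHP Q IHQ|C IHC P IHP Q IHQ| | |] /=.
- by move=> _ X h; inversion h.
- by case/andP=> /IHP tP /IHQ tQ; apply: terminates_seq.
- case/and3P=> /IHC tC /IHP tP /IHQ tQ X h.
  by inversion h; [apply: tC | apply: tP | apply: tQ]; eauto.
- case/and3P=> /IHC tC /IHP tP /IHQ tQ X h.
  by inversion h; [apply: tC | apply: tP | apply: tQ]; eauto.
all: by move=> _ X h; inversion h.
Qed.

Lemma terminates_loop (mu : hgraph -> nat) P :
  terminates P -> (forall X Y, exec P X (Res Y) -> mu Y < mu X) -> terminates (CLoop P).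
Proof.
move=> tP mu_lt X; have [n] := ubnP (mu X); elim: n X => // n IHn X lt_n h.
inversion h as [| | ? ? dP | ? ? Y eP dL | | | | | |]; subst; first exact: tP dP.
by apply: (IHn Y) dL; apply: leq_trans (mu_lt _ _ eP) _; rewrite -ltnS.
Qed.

Definition loop_invariant body (I Q : hgraph -> Prop) :=
  forall X o, exec body X o -> I X ->
    match o with Res Y => I Y | Brk Y => Q Y | Failed => Q X end.

Lemma exec_loop_invariant body I Q X o : loop_invariant body I Q ->
  exec (CLoop body) X o -> I X -> exists2 Y, o = Res Y & Q Y.
Proof.
move=> inv; move Ec: (CLoop body) => c h; elim: h Ec => // P X0.
- by move=> Y o' eP _ _ IH [eb] IX; subst P; apply: IH => //; apply: inv eP IX.
- by move=> eP _ [eb] IX; subst P; exists X0 => //; apply: inv eP IX.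
- by move=> Y eP _ [eb] IX; subst P; exists Y => //; apply: inv eP IX.
Qed.

Lemma updE (T : eqType) U (f : T -> U) a y b : upd f a y b = if b == a then y else f b.
Proof. by []. Qed.

Lemma sum_upd (T : finType) U (w : U -> nat) (f : T -> U) a y :
  \sum_(x : T) w (upd f a y x) + w (f a) = \sum_(x : T) w (f x) + w y.
Proof.
rewrite (bigD1 a) //= [in RHS](bigD1 a) //= updE eqxx.
rewrite (eq_bigr (fun x => w (f x))); first lia.
by move=> x /negbTE; rewrite updE => ->.
Qed.

(* Marks only move down the chains grey > red > {blue, green} and
   unmarked > red > dashed > blue, along which these weights strictly decrease. *)
Definition node_weight m := match m with NGrey => 2 | NRed => 1 | _ => 0 end.
Definition edge_weight m :=
  match m with EUnmarked => 3 | ERed => 2 | EDashed => 1 | _ => 0 end.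

Definition weight X :=
  \sum_(v : hV X) node_weight (hmarkV v) + \sum_(e : hE X) edge_weight (hmarkE e).

Lemma rule_weight_lt r X Y : r <> r_flag -> rule_app r X Y -> weight Y < weight X.
Proof.
rewrite /weight; case: r => //= _.
- case=> v [mv ->] /=.
  by have := sum_upd node_weight (@hmarkV X) v NRed; rewrite mv /=; lia.
- case=> v [_ [mv ->]] /=.
  by have := sum_upd node_weight (@hmarkV X) v NBlue; rewrite mv /=; lia.
- case=> v [_ [mv ->]] /=.
  by have := sum_upd node_weight (@hmarkV X) v NGreen; rewrite mv /=; lia.
- case=> v1 [v2 [e [_ [_ [_ [_ [_ [me ->]]]]]]]] /=.
  by have := sum_upd edge_weight (@hmarkE X) e ERed; rewrite me /=; lia.
- case=> v1 [v2 [e [_ [_ [_ [_ [_ [_ [me ->]]]]]]]]] /=.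
  by have := sum_upd edge_weight (@hmarkE X) e EBlue; rewrite me /=; lia.
- case=> v1 [v2 [e [v12 [_ [m1 [m2 [_ [_ [me ->]]]]]]]]] /=.
  have := sum_upd edge_weight (@hmarkE X) e EDashed; rewrite me /=.
  have := sum_upd node_weight (@hmarkV X) v1 NRed; rewrite m1 /=.
  have := sum_upd node_weight (upd (@hmarkV X) v1 NRed) v2 NRed.
  by rewrite updE eq_sym (negbTE v12) m2 /=; lia.
- case=> v1 [v2 [e [_ [_ [_ [m2 [_ [_ [me ->]]]]]]]]] /=.
  have := sum_upd edge_weight (@hmarkE X) e EBlue; rewrite me /=.
  by have := sum_upd node_weight (@hmarkV X) v2 NBlue; rewrite m2 /=; lia.
- case=> v [e [_ [mv [_ [_ [_ ->]]]]]] /=.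
  by have := sum_upd node_weight (@hmarkV X) v NGreen; rewrite mv /=; lia.
Qed.

Lemma rule_weight_le r X Y : rule_app r X Y -> weight Y <= weight X.
Proof.
case: r => [||| [v [_ [_ ->]]] //|||||] rXY; exact/ltnW/(rule_weight_lt _ rXY).
Qed.

Lemma exec_weight_le c X o : exec c X o ->
  if o is (Res Y | Brk Y) then weight Y <= weight X else true.
Proof.
elim=> //= {c X o}.
- by move=> rs r X Y _ /rule_weight_le.
- by move=> P Q X Y [Z| |Z] _ le1 _ le2 //; apply: leq_trans le2 le1.
- by move=> P X Y [Z| |Z] _ le1 _ le2 //; apply: leq_trans le2 le1.
- by move=> C P Q X Y [Z| |Z] _ le1 _ le2 //; apply: leq_trans le2 le1.
Qed.

Lemma exec_DFS_weight_lt X o : exec DFS X o -> if o is Res Y then weight Y < weight X else true.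
Proof.
case/exec_tryP => [Z {}o /exec_rule_res nZ /exec_weight_le | {}o _ |] //.
  by case: o => //= Y le_YZ; apply: leq_ltn_trans le_YZ (rule_weight_lt _ nZ).
case/exec_seqP => [Z {}o /exec_weight_le /= le_ZX | // | //].
case/exec_try_rule_else_breakP => // W bW.
exact: leq_trans (rule_weight_lt _ bW) le_ZX.
Qed.

Lemma is_dag_terminates : terminates is_dag.
Proof.
apply: terminates_seq; last exact: loop_free_terminates.
apply: (terminates_loop (mu := weight)); last first.
  move=> X0 Y /exec_seq_res [Z /exec_rule_res iZ /exec_weight_le /= le_YZ].
  exact: leq_ltn_trans le_YZ (rule_weight_lt _ iZ).
apply: terminates_seq; first exact: loop_free_terminates.
apply: terminates_seq; last exact: loop_free_terminates.
apply: (terminates_loop (mu := weight)); first exact: loop_free_terminates.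
by move=> X0 Y /exec_DFS_weight_lt.
Qed.

(** * Walks and cycles *)

Section Run.
Variable G : hgraph.
Local Notation V := (hV G).
Local Notation E := (hE G).
Local Notation marking_pred := ((V -> nmark) -> (E -> emark) -> (V -> bool) -> Prop).

Lemma acyclic_of_rank (f : V -> nat) : (forall e : E, f (htgt e) < f (hsrc e)) -> acyclic G.
Proof.
move=> f_lt [e0 [es /andP [walk /eqP closed]]].
suff: f (htgt (last e0 es)) < f (hsrc e0) by rewrite closed ltnn.
elim: es e0 walk {closed} => [|e es IH] e0 /=; first by move=> _; apply: f_lt.
case/andP=> /eqP e0e /IH /ltn_trans; apply; rewrite -e0e; exact: f_lt.
Qed.

Fixpoint walk_to (s : seq E) (r : V) : Prop :=
  if s is e :: s' then htgt e = head r (map (@hsrc G) s') /\ walk_to s' r else True.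

Lemma walk_to_rcons s e : walk_to s (hsrc e) -> walk_to (rcons s e) (htgt e).
Proof. by elim: s => [|a s IH] //= [-> /IH]; case: s {IH}. Qed.

Lemma walk_to_rcons_inv s r e : walk_to (rcons s e) r -> walk_to s (hsrc e) /\ htgt e = r.
Proof.
elim: s => [|a s IH] /=; first by case.
by case=> a_s /IH [walk ->]; do 2!split=> //; case: s a_s {IH walk}.
Qed.

Lemma walk_to_catr s1 s2 r : walk_to (s1 ++ s2) r -> walk_to s2 r.
Proof. by elim: s1 => [|a s1 IH] //= [_ /IH]. Qed.

Lemma walk_to_last s r e : walk_to s r -> r \notin map (@hsrc G) s -> e \in s -> htgt e = r ->
  exists s', s = rcons s' e.
Proof.
elim: s => [|a s IH] //= [a_s walk]; rewrite in_cons negb_or => /andP [ra rs].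
case/predU1P => [-> | e_s] er; last by have [s' ->] := IH walk rs e_s er; exists (a :: s').
case: s {IH walk} a_s rs => [_ _ | b s /= <-]; first by exists [::].
by rewrite er in_cons eqxx.
Qed.

Lemma walk_to_path e0 s e : walk_to (e0 :: s) (hsrc e) ->
  path (fun a b => htgt a == hsrc b) e0 (rcons s e).
Proof.
elim: s e0 => [|b s IH] e0 /= [-> walk]; first by rewrite eqxx.
by rewrite eqxx; apply: IH.
Qed.

Lemma back_edge_cycle s e : walk_to s (hsrc e) -> htgt e \in map (@hsrc G) s ->
  has_dir_cycle G.
Proof.
move=> walk /mapP [e0 e0_s e0e]; move: walk; case/splitPr: e0_s => s1 s2 /walk_to_catr walk.
exists e0, (rcons s2 e); rewrite last_rcons (walk_to_path walk) /=.
by rewrite e0e.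
Qed.

(** * Invariants of the search *)

Lemma remark_id : G = @remark G (@hmarkV G) (@hmarkE G) (@hroot G).
Proof. by case: G. Qed.

Lemma iso_upto_marks_remark (mv : V -> nmark) (me : E -> emark) (rt : V -> bool) :
  iso_upto_marks G (remark mv me rt).
Proof. by exists id, id; split; [exists id | split; [exists id |]]. Qed.

Record well_marked (mv : V -> nmark) (me : E -> emark) : Prop := {
  wm_loop : forall e, hsrc e = htgt e -> me e = EUnmarked;
  wm_edge_green : forall e, me e <> EGreen;
  wm_node_green : forall v, mv v <> NGreen;
  wm_node_unmarked : forall v, mv v <> NUnmarked;
  wm_blue_edge : forall e, me e = EBlue -> mv (htgt e) = NBlue;
  wm_blue_rank : exists f : V -> nat, forall e, mv (hsrc e) = NBlue ->
                   mv (htgt e) = NBlue /\ f (htgt e) < f (hsrc e) }.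

Lemma well_marked_node mv me v m : well_marked mv me -> mv v <> NBlue ->
  m <> NGreen -> m <> NUnmarked -> m <> NBlue -> well_marked (upd mv v m) me.
Proof.
case=> loop egreen ngreen nunm blue [f f_lt] v_nblue m_ngreen m_nunm m_nblue.
split=> // [w | w | e /blue | ]; rewrite ?updE.
- by case: eqP.
- by case: eqP.
- by case: eqP => // ->.
exists f => e; rewrite !updE; case: eqP => // _ /f_lt [blue_tgt lt].
by case: eqP => [tgt_v | //]; rewrite tgt_v in blue_tgt.
Qed.

Lemma well_marked_edge mv me e m : well_marked mv me -> hsrc e <> htgt e ->
  m <> EGreen -> (m = EBlue -> mv (htgt e) = NBlue) -> well_marked mv (upd me e m).
Proof.
case=> loop egreen ngreen nunm blue rank not_loop m_ngreen m_blue.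
split=> // [e' | e' | e']; rewrite updE.
- by case: eqP => [-> /not_loop | _ /loop].
- by case: eqP.
- by case: eqP => [-> /m_blue | _ /blue].
Qed.

Definition explored (r : V) (mv : V -> nmark) :=
  forall e : E, hsrc e = r -> htgt e <> r /\ mv (htgt e) = NBlue.

Lemma well_marked_finish mv me r : well_marked mv me -> mv r = NRed -> explored r mv ->
  well_marked (upd mv r NBlue) me.
Proof.
case=> loop egreen ngreen nunm blue [f f_lt] r_red r_explored.
split=> // [v | v | e /blue | ]; rewrite ?updE.
- by case: eqP.
- by case: eqP.
- by case: eqP.
exists (upd f r (\sum_(v : V) f v).+1) => e; rewrite !updE.
case: (hsrc e =P r) => [src_r _ | src_nr].
  have [tgt_nr tgt_blue] := r_explored e src_r; rewrite (introF eqP tgt_nr) tgt_blue.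
  by split=> //; rewrite ltnS (bigD1 (htgt e)) //= leq_addr.
move/f_lt=> [tgt_blue lt].
have tgt_nr : htgt e <> r by move=> tgt_r; rewrite tgt_r r_red in tgt_blue.
by rewrite (introF eqP tgt_nr).
Qed.

(* No rule adds or deletes items, so every graph reached from [G] is [G] with
   other marks and roots, and invariants are predicates on these. *)
Definition remarking (P : marking_pred) X :=
  exists mv me rt, X = remark mv me rt /\ P mv me rt.

Lemma remarking_remark P mv me rt : P mv me rt -> remarking P (remark mv me rt).
Proof. by exists mv, me, rt. Qed.

Lemma sub_remarking (P Q : marking_pred) X :
  remarking P X -> (forall mv me rt, P mv me rt -> Q mv me rt) -> remarking Q X.
Proof. by move=> [mv [me [rt [-> /[swap] PQ /PQ]]]]; apply: remarking_remark. Qed.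

Definition green_rooted (mv : V -> nmark) (me : E -> emark) (rt : V -> bool) :=
  exists2 v, rt v & mv v = NGreen.

Lemma green_rooted_rule r mv me rt Y : green_rooted mv me rt ->
  rule_app r (remark mv me rt) Y -> remarking green_rooted Y.
Proof.
move=> [v rv gv]; have v_ne x : mv x <> NGreen -> (v == x) = false.
  by move=> x_ng; apply/eqP => vx; rewrite vx in gv.
case: r => /=.
- by case=> x [gx ->]; apply: remarking_remark; exists v; rewrite !updE v_ne ?gx.
- by case=> x [_ [rx ->]]; apply: remarking_remark; exists v; rewrite !updE v_ne ?rx.
- by case=> x [rx [_ ->]]; apply: remarking_remark; exists x; rewrite ?updE ?eqxx.
- by case=> x [_ [_ ->]]; apply: remarking_remark; exists v.
- by case=> v1 [v2 [e [_ [_ [_ [_ [_ [_ ->]]]]]]]]; apply: remarking_remark; exists v.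
- by case=> v1 [v2 [e [_ [_ [_ [_ [_ [_ [_ ->]]]]]]]]]; apply: remarking_remark; exists v.
- case=> v1 [v2 [e [_ [_ [r1 [g2 [_ [_ [_ ->]]]]]]]]]; apply: remarking_remark.
  by exists v; rewrite !updE !v_ne ?r1 ?g2.
- case=> v1 [v2 [e [_ [r1 [_ [r2 [_ [_ [_ ->]]]]]]]]]; apply: remarking_remark.
  by exists v; rewrite !updE !v_ne ?r1 ?r2.
- by case=> x [e [rx [_ [_ [_ [_ ->]]]]]]; apply: remarking_remark; exists x; rewrite ?updE ?eqxx.
Qed.

Lemma green_rooted_exec c X o : exec c X o -> remarking green_rooted X ->
  if o is (Res Y | Brk Y) then remarking green_rooted Y else True.
Proof.
elim=> {c X o} //=; try by auto.
- by move=> rs r X Y _ rXY [mv [me [rt [eX g]]]]; subst X; apply: green_rooted_rule rXY.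
- by move=> P Q X Y o _ IH1 _ IH2 /IH1 /IH2.
- by move=> P X Y o _ IH1 _ IH2 /IH1 /IH2.
- by move=> C P Q X Y o _ IH1 _ IH2 /IH1 /IH2.
Qed.

(* Only [set_flag] and [loop] create a green root, each time with a cycle at hand. *)
Definition flagged (mv : V -> nmark) (me : E -> emark) (rt : V -> bool) :=
  green_rooted mv me rt /\ has_dir_cycle G.

Lemma flagged_exec c X o : exec c X o -> remarking flagged X ->
  if o is (Res Y | Brk Y) then remarking flagged Y else True.
Proof.
move=> h [mv [me [rt [eX [g cyc]]]]]; subst X.
have := green_rooted_exec h (remarking_remark g).
by case: o {h} => // Y /sub_remarking; apply.
Qed.

Record dfs_state (r : V) (st : seq E) mv me (rt : V -> bool) : Prop := {
  dfs_well_marked : well_marked mv me;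
  dfs_rootE : forall v, rt v = (v == r);
  dfs_redE : forall v, mv v = NRed <-> v \in r :: map (@hsrc G) st;
  dfs_dashedE : forall e, me e = EDashed <-> e \in st;
  dfs_walk : walk_to st r;
  dfs_uniq : uniq (r :: map (@hsrc G) st);
  dfs_no_red_edge : forall e, me e <> ERed }.

Definition dfs_running mv me rt := exists r st, dfs_state r st mv me rt.

Section DfsStep.
Variables (r : V) (st : seq E) (mv : V -> nmark) (me : E -> emark) (rt : V -> bool).
Hypothesis D : dfs_state r st mv me rt.

Lemma dfs_root_unique v : rt v -> v = r.
Proof. by rewrite (dfs_rootE D) => /eqP. Qed.

Lemma dfs_root : rt r.
Proof. by rewrite (dfs_rootE D). Qed.

Lemma dfs_root_red : mv r = NRed.
Proof. by apply/(dfs_redE D); rewrite inE eqxx. Qed.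

Lemma dfs_next_edge Y : rule_app r_next_edge (remark mv me rt) Y ->
  exists2 e, [/\ hsrc e = r, htgt e != r & me e = EUnmarked] &
             Y = remark mv (upd me e ERed) rt.
Proof.
case=> v1 [v2 [e [v12 [/dfs_root_unique v1r [_ [s1 [t2 [unm ->]]]]]]]]; subst v1 v2.
by exists e => //; split; rewrite // eq_sym.
Qed.

Section NextEdge.
Variable e : E.
Hypotheses (e_src : hsrc e = r) (e_tgt : htgt e != r).

Lemma red_edge_unique e' : upd me e ERed e' = ERed -> e' = e.
Proof. by rewrite updE; case: eqP => // _ /(dfs_no_red_edge D). Qed.

Lemma not_loop : hsrc e <> htgt e.
Proof. by apply/eqP; rewrite e_src eq_sym. Qed.

Lemma dfs_move Y : rule_app r_move (remark mv (upd me e ERed) rt) Y ->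
  remarking dfs_running Y.
Proof.
move=> /= [v1 [v2 [e' [_ [/dfs_root_unique v1r [_ [grey [_ [t2 [/red_edge_unique e'e ->]]]]]]]]]].
subst v1 v2 e'.
apply: remarking_remark; exists (htgt e), (rcons st e); split.
- have wm := dfs_well_marked D.
  have wm1 : well_marked mv (upd me e ERed) by apply: well_marked_edge wm not_loop _ _.
  have wm2 : well_marked mv (upd (upd me e ERed) e EDashed).
    exact: well_marked_edge wm1 not_loop _ _.
  apply: well_marked_node => //; last by rewrite updE (negbTE e_tgt) grey.
  by apply: well_marked_node => //; rewrite dfs_root_red.
- by move=> x; rewrite !updE (dfs_rootE D); case: (x == htgt e) => //; case: (x == r).
- move=> x; have := dfs_redE D x; rewrite !updE map_rcons e_src !inE mem_rcons !inE.
  by case: (x == htgt e) => //=; case: (x == r).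
- by move=> x; rewrite !updE mem_rcons inE; case: (x == e) => //=; apply: (dfs_dashedE D).
- by apply: walk_to_rcons; rewrite e_src; apply: (dfs_walk D).
- have fresh : htgt e \notin r :: map (@hsrc G) st by apply/negP => /(dfs_redE D); rewrite grey.
  by rewrite map_rcons e_src /= mem_rcons fresh rcons_uniq; apply: (dfs_uniq D).
- by move=> x; rewrite !updE; case: (x == e) => // /(dfs_no_red_edge D).
Qed.

Lemma dfs_ignore Y : me e = EUnmarked ->
  rule_app r_ignore (remark mv (upd me e ERed) rt) Y -> remarking dfs_running Y.
Proof.
move=> e_unmarked /=.
case=> v1 [v2 [e' [_ [/dfs_root_unique v1r [_ [blue [_ [t2 [/red_edge_unique e'e ->]]]]]]]]].
subst v1 v2 e'.
apply: remarking_remark; exists r, st.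
case: D => wm rootE redE dashedE walk uniq no_red; split=> //.
- apply: well_marked_edge not_loop _ _ => //.
  exact: well_marked_edge wm not_loop _ _.
- move=> x; rewrite !updE; case: eqP => [-> | _]; last exact: dashedE.
  by split=> // /dashedE; rewrite e_unmarked.
- by move=> x; rewrite !updE; case: (x == e) => // /no_red.
Qed.

(* Neither grey nor blue, the target is red, i.e. on the stack. *)
Lemma dfs_blocked_cycle :
  (forall Y, ~ rule_app r_move (remark mv (upd me e ERed) rt) Y) ->
  (forall Y, ~ rule_app r_ignore (remark mv (upd me e ERed) rt) Y) -> has_dir_cycle G.
Proof.
move=> no_move no_ignore; have wm := dfs_well_marked D.
have red : mv (htgt e) = NRed.
  case m: (mv (htgt e)) => //; first by case: (wm_node_unmarked wm m).
  - by case: (wm_node_green wm m).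
  - case: (no_ignore (remark mv (upd (upd me e ERed) e EBlue) rt)).
    exists r, (htgt e), e => /=.
    by rewrite eq_sym e_tgt dfs_root dfs_root_red m e_src updE eqxx; do !split.
  - case: (no_move (remark (upd (upd mv r NRed) (htgt e) NRed)
                             (upd (upd me e ERed) e EDashed) (upd (upd rt r false) (htgt e) true))).
    exists r, (htgt e), e => /=.
    by rewrite eq_sym e_tgt dfs_root dfs_root_red m e_src updE eqxx; do !split.
move/(dfs_redE D): red; rewrite inE (negbTE e_tgt) /=.
by apply: back_edge_cycle; rewrite e_src; apply: (dfs_walk D).
Qed.
End NextEdge.

Lemma dfs_explored :
  (forall Y, ~ rule_app r_next_edge (remark mv me rt) Y) ->
  (forall Y, ~ rule_app r_loop (remark mv me rt) Y) -> explored r mv.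
Proof.
move=> no_next no_loop e e_src; have wm := dfs_well_marked D.
have e_tgt : htgt e <> r.
  move=> e_tgt; apply: (no_loop (remark (upd mv r NGreen) me rt)); exists r, e => /=.
  have loop_unmarked : me e = EUnmarked by apply: (wm_loop wm); rewrite e_src e_tgt.
  by rewrite dfs_root dfs_root_red e_src e_tgt loop_unmarked; do !split.
split=> //; case m: (me e).
- case: (no_next (remark mv (upd me e ERed) rt)); exists r, (htgt e), e => /=.
  by rewrite eq_sym dfs_root dfs_root_red e_src m; do !split; apply/eqP.
- by case: (dfs_no_red_edge D m).
- by case: (wm_edge_green wm m).
- exact: (wm_blue_edge wm m).
- move/(dfs_dashedE D)/(map_f (@hsrc G)): m; rewrite e_src => r_st.
  by have := dfs_uniq D; rewrite /= r_st.
Qed.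

Lemma dfs_back Y : explored r mv -> rule_app r_back (remark mv me rt) Y ->
  remarking dfs_running Y.
Proof.
move=> expl /= [v [r' [e [vr [red_v [/dfs_root_unique r'r [_ [e_src [e_tgt [dashed ->]]]]]]]]]].
subst r'; have r_fresh : r \notin map (@hsrc G) st by case/andP: (dfs_uniq D).
have [st' st_e] := walk_to_last (dfs_walk D) r_fresh (proj1 (dfs_dashedE D e) dashed) e_tgt.
case: D => wm rootE redE dashedE walk uniq no_red; rewrite st_e in redE dashedE walk uniq.
rewrite map_rcons e_src /= mem_rcons rcons_uniq in uniq.
case/andP: uniq => r_fresh' /andP [v_fresh uniq'].
apply: remarking_remark; exists v, st'; split=> //.
- apply: well_marked_edge.
  + exact: well_marked_finish wm dfs_root_red expl.
  + by rewrite e_src e_tgt; apply/eqP.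
  + done.
  + by rewrite e_tgt updE eqxx.
- move=> x; rewrite !updE rootE; case: (x =P r) => [-> | _]; last by case: (x == v).
  by rewrite eq_sym (negbTE vr).
- move=> x; rewrite updE; case: (x =P r) => [-> | xr]; first by rewrite (negbTE r_fresh').
  by rewrite redE map_rcons e_src !inE mem_rcons inE (introF eqP xr).
- move=> x; rewrite updE; case: (x =P e) => [-> | xe].
    by split=> // /(map_f (@hsrc G)); rewrite e_src (negbTE v_fresh).
  by rewrite dashedE mem_rcons inE (introF eqP xe).
- by rewrite -e_src; case: (walk_to_rcons_inv walk).
- by rewrite /= v_fresh.
- by move=> x; rewrite updE; case: (x == e) => // /no_red.
Qed.

Lemma dfs_back_stuck : (forall Y, ~ rule_app r_back (remark mv me rt) Y) -> st = [::].
Proof.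
move=> no_back; case/lastP: st D => // st' e [wm rootE redE dashedE walk uniq no_red].
have [_ e_tgt] := walk_to_rcons_inv walk.
case: (no_back (remark (upd mv r NBlue) (upd me e EBlue)
                       (upd (upd rt (hsrc e) true) r false))).
exists (hsrc e), r, e => /=; rewrite e_tgt rootE eqxx.
have r_red : mv r = NRed by apply/redE; rewrite inE eqxx.
have v_red : mv (hsrc e) = NRed by apply/redE; rewrite map_rcons !inE mem_rcons inE eqxx orbT.
have dashed : me e = EDashed by apply/dashedE; rewrite mem_rcons inE eqxx.
rewrite r_red v_red dashed; do !split.
by apply: contraTneq uniq; rewrite map_rcons => ->; rewrite /= mem_rcons inE eqxx.
Qed.
End DfsStep.

Lemma set_flag_green_rooted (mv : V -> nmark) me rt Y :
  rule_app r_set_flag (remark mv me rt) Y -> remarking green_rooted Y.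
Proof. by case=> v [rv [_ ->]]; apply: remarking_remark; exists v; rewrite ?updE ?eqxx. Qed.

Lemma loop_flagged (mv : V -> nmark) me rt Y :
  rule_app r_loop (remark mv me rt) Y -> remarking flagged Y.
Proof.
case=> v [e [rv [_ [e_src [e_tgt [_ ->]]]]]]; apply: remarking_remark.
by split; [exists v; rewrite ?updE ?eqxx | exists e, [::]; rewrite /= e_src e_tgt].
Qed.

Definition or_flagged (P : marking_pred) mv me rt :=
  P mv me rt \/ flagged mv me rt.

Lemma loop_invariant_or_flagged body P Q :
  (forall (mv : V -> nmark) me rt o, P mv me rt -> exec body (remark mv me rt) o ->
     match o with
     | Res Y => remarking (or_flagged P) Y
     | Brk Y => remarking (or_flagged Q) Y
     | Failed => or_flagged Q mv me rt
     end) ->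
  loop_invariant body (remarking (or_flagged P)) (remarking (or_flagged Q)).
Proof.
move=> step X o h [mv [me [rt [eX [IP | F]]]]]; subst X.
  by have := step _ _ _ _ IP h; case: o {h} => // res; apply: remarking_remark.
have := flagged_exec h (remarking_remark F).
by case: o {h} => [Y| |Y] /= FY;
  [apply: (sub_remarking FY) | apply: remarking_remark | apply: (sub_remarking FY)] => *; right.
Qed.

Definition dfs_done mv me rt := exists2 r, dfs_state r [::] mv me rt & explored r mv.

Lemma dfs_step r st mv me rt o : dfs_state r st mv me rt -> exec DFS (remark mv me rt) o ->
  match o with
  | Res Y => remarking (or_flagged dfs_running) Y
  | Brk Y => remarking (or_flagged dfs_done) Y
  | Failed => or_flagged dfs_done mv me rt
  end.
Proof.
move=> D; case/exec_tryP => [Y {}o /exec_rule_res next | {}o /exec_rule_failed no_next |];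
  last by move=> Y /exec_rules_no_brk.
- have [e [e_src e_tgt e_unmarked] ->] := dfs_next_edge D next.
  case/exec_tryP => [Z {}o /exec_rules_res [rl rl_in app] /exec_skip -> | {}o blocked |];
    last by move=> Z /exec_rules_no_brk.
    case: rl_in app => [<- | [<- | []]] app.
    + by apply: (sub_remarking (dfs_move D e_src e_tgt app)) => *; left.
    + by apply: (sub_remarking (dfs_ignore D e_src e_tgt e_unmarked app)) => *; left.
  have no_rule := exec_rules_failed blocked.
  have cyc := dfs_blocked_cycle D e_src e_tgt (no_rule _ (or_introl erefl))
                                (no_rule _ (or_intror (or_introl erefl))).
  case/exec_seqP => [Z {}o /exec_rule_res /set_flag_green_rooted green /exec_break -> |
                     /exec_rule_failed stuck |]; last by move=> Z /exec_rules_no_brk.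
    by apply: (sub_remarking green) => *; right.
  case: (stuck (remark (upd mv r NGreen) (upd me e ERed) rt)).
  by exists r => /=; rewrite (dfs_root D) (dfs_root_red D).
- case/exec_seqP => [Z {}o try_loop | /exec_try_rule_res [] // | Z /exec_try_rule_res [] //].
  case/exec_try_ruleP: try_loop => [W /loop_flagged F | no_loop] try_back.
    have := flagged_exec try_back F; case: o try_back => [Y| |Y] try_back /= FY.
    + by apply: (sub_remarking FY) => *; right.
    + by case: (never_fails_try never_fails_skip never_fails_break try_back).
    + by apply: (sub_remarking FY) => *; right.
  have expl := dfs_explored D no_next no_loop.
  case/exec_try_rule_else_breakP: try_back => [Y back | no_back].
    by apply: (sub_remarking (dfs_back D expl back)) => *; left.
  apply: remarking_remark; left; exists r => //.
  by rewrite -(dfs_back_stuck D no_back).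
Qed.

Lemma dfs_loop_invariant :
  loop_invariant DFS (remarking (or_flagged dfs_running)) (remarking (or_flagged dfs_done)).
Proof. by apply: loop_invariant_or_flagged => mv me rt o [r [st D]]; apply: dfs_step D. Qed.

(** * The outer loop *)

Record idle mv me (rt : V -> bool) : Prop := {
  idle_well_marked : well_marked mv me;
  idle_no_root : forall v, rt v = false;
  idle_no_red : forall v, mv v <> NRed;
  idle_no_red_edge : forall e, me e <> ERed;
  idle_no_dashed : forall e, me e <> EDashed }.

Definition idle_done mv me rt := idle mv me rt /\ forall v, mv v <> NGrey.

Lemma idle_init (mv : V -> nmark) me rt Y :
  idle mv me rt -> rule_app r_init (remark mv me rt) Y -> remarking dfs_running Y.
Proof.
move=> [wm no_root no_red no_red_edge no_dashed] /= [v [grey ->]].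
apply: remarking_remark; exists v, [::]; split=> //=.
- by apply: well_marked_node => //; rewrite grey.
- by move=> x; rewrite updE no_root; case: (x == v).
- move=> x; rewrite updE inE; case: eqP => // _.
  by split=> // /no_red.
- by move=> e; split=> // /no_dashed.
Qed.

Lemma idle_init_stuck (mv : V -> nmark) me rt :
  (forall Y, ~ rule_app r_init (remark mv me rt) Y) -> forall v, mv v <> NGrey.
Proof.
by move=> stuck v grey; apply: (stuck (remark (upd mv v NRed) me (upd rt v true))); exists v.
Qed.

Lemma dfs_done_unroot (mv : V -> nmark) me rt Y : dfs_done mv me rt ->
  rule_app r_unroot (remark mv me rt) Y -> remarking idle Y.
Proof.
move=> [r D expl] /= [v [/(dfs_root_unique D) -> [_ ->]]]; apply: remarking_remark.
have r_red := dfs_root_red D.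
case: D => wm rootE redE dashedE _ _ no_red; split=> //.
- exact: well_marked_finish wm r_red expl.
- by move=> x; rewrite updE rootE; case: eqP.
- by move=> x; rewrite updE; case: eqP => // xr /redE; rewrite inE => /eqP.
- by move=> e /dashedE.
Qed.

Definition dfs_round := CSeq (R1 r_init) (CSeq (CLoop DFS) (CTry (R1 r_unroot) Skip Break)).

Lemma round_step mv me rt o : idle mv me rt -> exec dfs_round (remark mv me rt) o ->
  match o with
  | Res Y => remarking (or_flagged idle) Y
  | Brk Y => remarking (or_flagged idle_done) Y
  | Failed => or_flagged idle_done mv me rt
  end.
Proof.
move=> I; case/exec_seqP => [Y {}o /exec_rule_res /(idle_init I) run | /exec_rule_failed stuck |];
  last by move=> Y /exec_rules_no_brk.
  have start : remarking (or_flagged dfs_running) Y by apply: (sub_remarking run) => *; left.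
  case/exec_seqP => [Z {}o search + | search | Z search]; last 2 first.
  - by have [] := exec_loop_invariant dfs_loop_invariant search start.
  - by have [] := exec_loop_invariant dfs_loop_invariant search start.
  have [_ [->] [mv' [me' [rt' [-> [fin | F]]]]]] :=
    exec_loop_invariant dfs_loop_invariant search start.
  - case/exec_try_rule_else_breakP => [W unroot | no_unroot].
      by apply: (sub_remarking (dfs_done_unroot fin unroot)) => *; left.
    case: fin => r D _; case: (no_unroot (remark (upd mv' r NBlue) me' (upd rt' r false))).
    by exists r => /=; rewrite (dfs_root D) (dfs_root_red D).
  - move=> finish; have := flagged_exec finish (remarking_remark F).
    case: o finish => [W| |W] finish /= FW.
    + by apply: (sub_remarking FW) => *; right.
    + by case: (never_fails_try never_fails_skip never_fails_break finish).
    + by apply: (sub_remarking FW) => *; right.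
by left; split=> //; apply: idle_init_stuck.
Qed.

Lemma round_loop_invariant :
  loop_invariant dfs_round (remarking (or_flagged idle)) (remarking (or_flagged idle_done)).
Proof. by apply: loop_invariant_or_flagged => mv me rt o; apply: round_step. Qed.

Lemma idle_done_acyclic mv me rt : idle_done mv me rt -> acyclic G.
Proof.
case=> [[wm _ no_red _ _] no_grey].
have blue v : mv v = NBlue.
  case m: (mv v) => //.
  - by case: (wm_node_unmarked wm m).
  - by case: (no_red _ m).
  - by case: (wm_node_green wm m).
  - by case: (no_grey _ m).
have [f f_lt] := wm_blue_rank wm.
by apply: (acyclic_of_rank (f := f)) => e; case: (f_lt e (blue _)).
Qed.

Lemma initial_idle : initial_graph G -> remarking (or_flagged idle) G.
Proof.
case=> init_v init_e; exists (@hmarkV G), (@hmarkE G), (@hroot G).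
split; first exact: remark_id.
left; split=> [| v | v | e | e]; rewrite ?init_e ?(init_v v).1 ?(init_v v).2 //.
split=> [e _ | e | v | v | e |]; rewrite ?init_e ?(init_v v).1 //.
by exists (fun=> 0) => e; rewrite (init_v _).1.
Qed.

Lemma exec_is_dag o : initial_graph G -> exec is_dag G o ->
  (exists2 H, o = Res H & iso_upto_marks G H /\ acyclic G) \/ (o = Failed /\ has_dir_cycle G).
Proof.
move=> init; case/exec_seqP => [X {}o search check | search | X search]; last 2 first.
- by have [] := exec_loop_invariant round_loop_invariant search (initial_idle init).
- by have [] := exec_loop_invariant round_loop_invariant search (initial_idle init).
have [_ [<-] [mv [me [rt [eX [fin | [[v rv gv] cyc]]]]]]] :=
  exec_loop_invariant round_loop_invariant search (initial_idle init).
all: subst X; case/exec_ifP: check => [Z {}o /exec_rule_res flag run |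
                                       {}o /exec_rule_failed no_flag run | Z /exec_rules_no_brk //].
- by case: fin flag => [[wm _ _ _ _] _] /= [v [_ [/(wm_node_green wm)]]].
- left; exists (remark mv me rt); first exact: exec_skip run.
  by split; [apply: iso_upto_marks_remark | apply: idle_done_acyclic fin].
- by right; rewrite (exec_fail run).
- by case: (no_flag (remark mv me rt)); exists v.
Qed.

End Run.

Theorem mainTheorem4 (G : hgraph) :
  initial_graph G ->
  ~ diverges is_dag G /\
  (acyclic G ->
     (exists H, exec is_dag G (Res H)) /\
     (forall o, exec is_dag G o -> exists H, o = Res H /\ iso_upto_marks G H)) /\
  (has_dir_cycle G ->
     exec is_dag G Failed /\ (forall o, exec is_dag G o -> o = Failed)).
Proof.
move=> init; have [[o run] | /is_dag_terminates //] := exec_or_diverges is_dag G.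
split; first exact: is_dag_terminates.
split=> [acyc | cyc]; split.
- by have [[H eo _] | [_ /acyc]] := exec_is_dag init run; [exists H; rewrite -eo |].
- by move=> o' /(exec_is_dag init) [[H -> [iso _]] | [_ /acyc]]; [exists H |].
- by have [[H _ [_ /(_ cyc)]] | [<- _]] := exec_is_dag init run.
- by move=> o' /(exec_is_dag init) [[H _ [_ /(_ cyc)]] | []].
Qed.
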